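(* Let $H$ be a separable infinite-dimensional Hilbert space and let $\Phi:\mathcal{T}(H)\to\mathcal{T}(H)$ be the channel $\Phi(X)=\sum_{k=1}^\infty u_kv_k^*Xv_ku_k^*=\sum_{k=1}^\infty E_kXE_k^*$, where $E_k=u_kv_k^*$, $u_k,v_k\in H$, $\|u_k\|=1$ for all $k$, and $\sum_{k=1}^\infty v_kv_k^*=I_H$. Let $\mathcal{M}_\Phi=\{A\in\mathcal{T}(H):\Phi(AX)=\Phi(A)\Phi(X)\text{ and }\Phi(XA)=\Phi(X)\Phi(A)\text{ for all }X\in\mathcal{T}(H)\}$ be its multiplicative domain. If an orthogonal projection $P$ lies in $\mathcal{M}_\Phi$, then every $v_k$ is an eigenvector of $P$. Moreover, any two orthogonal projections in $\mathcal{M}_\Phi$ commute.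
   Context: $\mathcal{T}(H)$ denotes the trace-class operators on $H$. (Channels of the given form are exactly the strongly entanglement breaking channels on $\mathcal{T}(H)$.) *)

From HB Require Import structures.
From mathcomp Require Import all_boot all_order all_algebra.
From mathcomp Require Import reals.
From mathcomp Require Import complex.
From Stdlib Require Import ClassicalEpsilon.

Set Implicit Arguments.
Unset Strict Implicit.
Unset Printing Implicit Defensive.

Import Order.TTheory GRing.Theory Num.Theory.
Local Open Scope ring_scope.

Section Hilbert.
Variables (R : realType) (H : lmodType R[i]) (ip : H -> H -> R[i]).

(* ip x y = <x, y>: conjugate-linear in x, linear in y. *)
Definition hnorm (x : H) : R := Num.sqrt (complex.Re (ip x x)).

Definition hconverges (s : nat -> H) (l : H) : Prop :=
  forall e : R, 0 < e -> exists N : nat, forall n, (N <= n)%N -> hnorm (s n - l) < e.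

Definition hcauchy (s : nat -> H) : Prop :=
  forall e : R, 0 < e -> exists N : nat, forall m n, (N <= m)%N -> (N <= n)%N ->
    hnorm (s m - s n) < e.

(* the (unique, when it exists) norm limit of a sequence *)
Definition hlim (s : nat -> H) : H := epsilon (inhabits 0) (hconverges s).

Definition orthonormal_seq (e : nat -> H) : Prop :=
  forall i j : nat, ip (e i) (e j) = (i == j)%:R.

Definition separable_infdim_hilbert : Prop :=
  (forall x y z (a : R[i]), ip x (a *: y + z) = a * ip x y + ip x z) /\
  (forall x y, ip y x = (ip x y)^*) /\
  (forall x, 0 <= ip x x) /\
  (forall x, ip x x = 0 -> x = 0) /\
  (forall s, hcauchy s -> exists l, hconverges s l) /\
  (exists d : nat -> H, forall x (e : R), 0 < e -> exists n, hnorm (x - d n) < e) /\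
  (exists e : nat -> H, orthonormal_seq e).

Definition bounded_op (T : H -> H) : Prop :=
  (forall (a : R[i]) x y, T (a *: x + y) = a *: T x + T y) /\
  (exists M : R, forall x, hnorm (T x) <= M * hnorm x).

(* trace-class operators T(H), as nuclear operators:
   T z = sum_n <b_n, z> a_n with sum_n ||a_n|| ||b_n|| < oo *)
Definition trace_class (T : H -> H) : Prop :=
  exists (a b : nat -> H),
    (exists M : R, forall n, \sum_(k < n) hnorm (a k) * hnorm (b k) <= M) /\
    (forall z, hconverges (fun n => \sum_(k < n) ip (b k) z *: a k) (T z)).

Definition orth_projection (P : H -> H) : Prop :=
  [/\ bounded_op P, (forall x, P (P x) = P x) & (forall x y, ip (P x) y = ip x (P y))].

(* sum_k v_k v_k^* = I_H  (strong operator convergence) *)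
Definition resolution_of_identity (v : nat -> H) : Prop :=
  forall x, hconverges (fun n => \sum_(k < n) ip (v k) x *: v k) x.

(* Phi(X) = sum_k u_k v_k^* X v_k u_k^*, i.e.
   Phi(X) y = sum_k <v_k, X v_k> <u_k, y> u_k *)
Definition Phi (u v : nat -> H) (X : H -> H) : H -> H :=
  fun y => hlim (fun n => \sum_(k < n) (ip (v k) (X (v k)) * ip (u k) y) *: u k).

Definition mult_domain (u v : nat -> H) (A : H -> H) : Prop :=
  trace_class A /\
  forall X : H -> H, trace_class X ->
    Phi u v (A \o X) = Phi u v A \o Phi u v X /\
    Phi u v (X \o A) = Phi u v X \o Phi u v A.

End Hilbert.

From HB Require Import structures.
From mathcomp Require Import all_boot all_order all_algebra.
From mathcomp Require Import classical_sets reals complex.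
From mathcomp Require Import ring lra.
From Stdlib Require Import ClassicalEpsilon FunctionalExtensionality.
Import Order.TTheory GRing.Theory Num.Theory ComplexField.Normc.
Local Open Scope ring_scope.

(* Let P be a projection in the multiplicative domain with P v_k <> 0 and put
   w := v_k - P v_k.  Then P w = 0, so P X = 0 for the rank-one X := |w><w| and
   multiplicativity gives Phi(P) W = 0 for W := Phi(X) u_k.  If A has nonnegative
   weights a_m := <v_m, A v_m>, then <y, Phi(A) y> = sum_m a_m |<u_m, y>|^2, a
   series of nonnegative terms; for A = P the weights ||P v_m||^2 are summable
   because P is trace class, for A = X the weights |<v_m, w>|^2 by Bessel's
   inequality.  Pairing Phi(P) W = 0 with W forces <u_k, W> = 0, and pairing W
   with u_k then forces <v_k, w> = 0, whence ||w||^2 = <v_k, w> - <v_k, P w> = 0.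
   So P v_k is 0 or v_k; two such projections commute on every v_k, hence
   everywhere because sum_k v_k v_k^* = I. *)

Set Implicit Arguments.
Unset Strict Implicit.
Unset Printing Implicit Defensive.

Section ComplexFacts.
Variable R : rcfType.
Implicit Types (z : R[i]) (r : R).

Lemma ge0_complexE z : 0 <= z -> z = (complex.Re z)%:C%C.
Proof. by move=> /ger0_real /RRe_real. Qed.

Lemma normc_ge0 z : 0 <= normc z.
Proof. by case: z => a b; apply: sqrtr_ge0. Qed.

Lemma normc_real r : 0 <= r -> normc r%:C%C = r.
Proof. by move=> r0; rewrite /normc /= expr0n addr0 sqrtr_sqr ger0_norm. Qed.

Lemma mulcJ_normc z : z * z^* = (normc z ^+ 2)%:C%C.
Proof. by rewrite rmorphXn; exact: (esym (sqr_normc z)). Qed.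

Lemma mulJc_normc z : z^* * z = (normc z ^+ 2)%:C%C.
Proof. by rewrite mulrC mulcJ_normc. Qed.

Lemma Re_le_normc z : complex.Re z <= normc z.
Proof.
have : `|complex.Re z|%:C%C <= (normc z)%:C%C := normc_ge_Re z.
by rewrite lecR; apply: le_trans (ler_norm _).
Qed.

Lemma ReD z1 z2 : complex.Re (z1 + z2) = complex.Re z1 + complex.Re z2.
Proof. by case: z1; case: z2. Qed.

Lemma Re_sum I (r : seq I) (P : pred I) (F : I -> R[i]) :
  complex.Re (\sum_(i <- r | P i) F i) = \sum_(i <- r | P i) complex.Re (F i).
Proof. exact: (big_morph _ ReD (erefl : complex.Re 0 = 0)). Qed.

Lemma normc_sqr_le0 z : normc z ^+ 2 <= 0 -> z = 0.
Proof.
by move=> le0; apply/eq0_normc/eqP; rewrite -sqrf_eq0 eq_le le0 exprn_ge0 ?normc_ge0.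
Qed.

Lemma normc_sum I (r : seq I) (P : pred I) (F : I -> R[i]) :
  normc (\sum_(i <- r | P i) F i) <= \sum_(i <- r | P i) normc (F i).
Proof.
elim/big_rec2: _ => [|i y1 y2 _ IH]; first by rewrite normc0.
by apply: le_trans (le_normcD _ _) _; rewrite lerD2l.
Qed.

End ComplexFacts.

Section RealFacts.
Variable R : realFieldType.

Lemma le_mul_of_quadratic_ge0 (A B c : R) : 0 <= A -> 0 <= B -> 0 <= c ->
  (forall s, 0 <= A - 2 * s * c + s ^+ 2 * c * B) -> c <= A * B.
Proof.
move=> A0 B0 c0 quad.
have [B0'|Bn0] := eqVneq B 0.
  rewrite B0' mulr0; have [//|cn0] := eqVneq c 0; first by move->.
  have := quad ((A + 1) / (2 * c)).
  have -> : 2 * ((A + 1) / (2 * c)) * c = A + 1 by field; rewrite cn0.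
  rewrite B0' mulr0 addr0; lra.
have := quad B^-1.
have -> : B^-1 ^+ 2 * c * B = B^-1 * c by field.
have : B * B^-1 = 1 by rewrite mulfV.
have : 0 < B by rewrite lt_def Bn0.
nra.
Qed.

Lemma le_of_le_add_eps (x y c : R) : 0 <= c ->
  (forall e, 0 < e -> x <= y + c * e) -> x <= y.
Proof.
move=> c0 h; apply/ler_addgt0Pr => e e0.
have c1 : 0 < c + 1 by lra.
have := h (e / (c + 1)); rewrite divr_gt0 // => /(_ isT) h1.
have : c * (e / (c + 1)) <= e by rewrite mulrA ler_pdivrMr //; nra.
lra.
Qed.

Lemma sum_le_prefix (t : nat -> R) N n : (forall m, 0 <= t m) -> (N <= n)%N ->
  \sum_(m < N) t m <= \sum_(m < n) t m.
Proof.
move=> t0 /subnKC <-; rewrite big_split_ord /= lerDl.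
by apply: sumr_ge0 => i _.
Qed.

Lemma term_le_sum (t : nat -> R) k : (forall m, 0 <= t m) ->
  t k <= \sum_(m < k.+1) t m.
Proof. by move=> t0; rewrite big_ord_recr /= lerDr; apply: sumr_ge0. Qed.

End RealFacts.

Lemma eventually_all_ltn (Q : nat -> nat -> Prop) :
  (forall m, exists N0, forall n, (N0 <= n)%N -> Q m n) ->
  forall N, exists n0, forall n, (n0 <= n)%N -> forall m, (m < N)%N -> Q m n.
Proof.
move=> ev; elim=> [|N [n0 IH]]; first by exists 0%N.
have [N1 h1] := ev N.
exists (maxn n0 N1) => n; rewrite geq_max => /andP[n0n N1n] m.
by rewrite ltnS leq_eqVlt => /predU1P[->|]; [apply: h1 | apply: IH].
Qed.

Section Sesquilinear.
Variables (R : rcfType) (V : lmodType R[i]) (f : V -> V -> R[i]).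
Hypothesis f_linear : forall x y z (a : R[i]), f x (a *: y + z) = a * f x y + f x z.
Hypothesis f_sym : forall x y, f y x = (f x y)^*.

Lemma sesq0r x : f x 0 = 0.
Proof.
have := f_linear x 0 0 1; rewrite scaler0 addr0 mul1r => e.
by apply/(addrI (f x 0)); rewrite addr0 -e.
Qed.

Lemma sesqZr x a y : f x (a *: y) = a * f x y.
Proof. by rewrite -[a *: y]addr0 f_linear sesq0r addr0. Qed.

Lemma sesqDr x y z : f x (y + z) = f x y + f x z.
Proof. by rewrite -{1}[y]scale1r f_linear mul1r. Qed.

Lemma sesqNr x y : f x (- y) = - f x y.
Proof. by rewrite -scaleN1r sesqZr mulN1r. Qed.

Lemma sesqBr x y z : f x (y - z) = f x y - f x z.
Proof. by rewrite sesqDr sesqNr. Qed.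

Lemma sesq_sumr x I (r : seq I) (P : pred I) (F : I -> V) :
  f x (\sum_(i <- r | P i) F i) = \sum_(i <- r | P i) f x (F i).
Proof. exact: (big_morph _ (sesqDr x) (sesq0r x)). Qed.

Lemma sesqDl x y z : f (y + z) x = f y x + f z x.
Proof. by rewrite !(f_sym x) sesqDr rmorphD. Qed.

Lemma sesqZl x a y : f (a *: y) x = a^* * f y x.
Proof. by rewrite !(f_sym x) sesqZr rmorphM. Qed.

Lemma sesqNl x y : f (- y) x = - f y x.
Proof. by rewrite !(f_sym x) sesqNr rmorphN. Qed.

Lemma sesqBl x y z : f (y - z) x = f y x - f z x.
Proof. by rewrite sesqDl sesqNl. Qed.

Lemma sesq0l x : f 0 x = 0.
Proof. by rewrite f_sym sesq0r conjC0. Qed.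

Hypothesis f_ge0 : forall x, 0 <= f x x.

Lemma sesq_cauchy_schwarz x y :
  normc (f x y) ^+ 2 <= complex.Re (f x x) * complex.Re (f y y).
Proof.
set c := f x y; set n := normc c ^+ 2.
set A := complex.Re (f x x); set B := complex.Re (f y y).
have eA : f x x = A%:C%C by exact: ge0_complexE.
have eB : f y y = B%:C%C by exact: ge0_complexE.
have cc : c * c^* = n%:C%C by exact: mulcJ_normc.
apply: le_mul_of_quadratic_ge0; rewrite ?exprn_ge0 ?normc_ge0 -?ler0c -?eA -?eB //.
clearbody n => s.
set t := s%:C%C * c^*.
have tJ : t^* = s%:C%C * c by rewrite rmorphM /= conjCK; congr (_ * _); exact: conjc_real.
have expand : f (x - t *: y) (x - t *: y) = (A - 2 * s * n + s ^+ 2 * n * B)%:C%C.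
  rewrite sesqBl !sesqBr !sesqZl !sesqZr eA eB (f_sym x y) -/c tJ /t.
  by rewrite !(rmorphB, rmorphD, rmorphM, rmorphXn) /= -cc; ring.
by rewrite -ler0c -expand.
Qed.

End Sesquilinear.

Section BoundedOp.
Variables (R : realType) (H : lmodType R[i]) (ip : H -> H -> R[i]) (T : H -> H).
Hypothesis hT : bounded_op ip T.

Lemma bounded_op0 : T 0 = 0.
Proof.
have := hT.1 1 0 0; rewrite !scale1r addr0 => e.
by apply/(addrI (T 0)); rewrite addr0 -e.
Qed.

Lemma bounded_opZ a x : T (a *: x) = a *: T x.
Proof. by have := hT.1 a x 0; rewrite !addr0 bounded_op0 addr0. Qed.

Lemma bounded_opD x y : T (x + y) = T x + T y.
Proof. by rewrite -{1}[x]scale1r hT.1 scale1r. Qed.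

Lemma bounded_opB x y : T (x - y) = T x - T y.
Proof. by have := hT.1 (-1) y x; rewrite !scaleN1r addrC => ->; rewrite addrC. Qed.

Lemma bounded_op_sum I (r : seq I) (P : pred I) (F : I -> H) :
  T (\sum_(i <- r | P i) F i) = \sum_(i <- r | P i) T (F i).
Proof. exact: (big_morph _ bounded_opD bounded_op0). Qed.

End BoundedOp.

Section Hilbert.
Variables (R : realType) (H : lmodType R[i]) (ip : H -> H -> R[i]).
Hypothesis ip_linear : forall x y z (a : R[i]), ip x (a *: y + z) = a * ip x y + ip x z.
Hypothesis ip_sym : forall x y, ip y x = (ip x y)^*.
Hypothesis ip_ge0 : forall x, 0 <= ip x x.
Hypothesis ip_definite : forall x, ip x x = 0 -> x = 0.

Let ip0r := sesq0r ip_linear.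
Let ipZr := sesqZr ip_linear.
Let ipDr := sesqDr ip_linear.
Let ipBr := sesqBr ip_linear.
Let ip_sumr := sesq_sumr ip_linear.
Let ipDl := sesqDl ip_linear ip_sym.
Let ipZl := sesqZl ip_linear ip_sym.
Let ipBl := sesqBl ip_linear ip_sym.
Let ip0l := sesq0l ip_linear ip_sym.

Local Notation hn := (hnorm ip).

Lemma hnorm_ge0 x : 0 <= hn x.
Proof. exact: sqrtr_ge0. Qed.

Lemma hnorm_sqr x : hn x ^+ 2 = complex.Re (ip x x).
Proof. by rewrite sqr_sqrtr // -ler0c -ge0_complexE. Qed.

Lemma ip_normE x : ip x x = (hn x ^+ 2)%:C%C.
Proof. by rewrite hnorm_sqr -ge0_complexE. Qed.

Lemma ip_cauchy_schwarz x y : normc (ip x y) <= hn x * hn y.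
Proof.
rewrite -ler_sqr ?nnegrE ?normc_ge0 ?mulr_ge0 ?hnorm_ge0 // exprMn !hnorm_sqr.
exact: sesq_cauchy_schwarz.
Qed.

Lemma hnorm0 : hn 0 = 0.
Proof. by rewrite /hnorm ip0r sqrtr0. Qed.

Lemma hnorm_eq0 x : hn x = 0 -> x = 0.
Proof. by move=> x0; apply: ip_definite; rewrite ip_normE x0 expr0n. Qed.

Lemma hnormZ a x : hn (a *: x) = normc a * hn x.
Proof.
rewrite {1}/hnorm ipZl ipZr mulrA mulJc_normc ip_normE -rmorphM -exprMn /=.
by rewrite sqrtr_sqr ger0_norm // mulr_ge0 ?normc_ge0 ?hnorm_ge0.
Qed.

Lemma hnormN x : hn (- x) = hn x.
Proof. by rewrite -scaleN1r hnormZ normcN normc1 mul1r. Qed.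

Lemma hnormB x y : hn (x - y) = hn (y - x).
Proof. by rewrite -hnormN opprB. Qed.

Lemma hnormD x y : hn (x + y) <= hn x + hn y.
Proof.
rewrite -ler_sqr ?nnegrE ?addr_ge0 ?hnorm_ge0 // hnorm_sqr ipDl !ipDr.
rewrite (ip_sym x y) !ReD -!hnorm_sqr.
have -> : complex.Re (ip x y)^* = complex.Re (ip x y) by case: (ip x y).
have := Re_le_normc (ip x y); have := ip_cauchy_schwarz x y; nra.
Qed.

Lemma hconverges_unique s l l' : hconverges ip s l -> hconverges ip s l' -> l = l'.
Proof.
move=> sl sl'; apply/eqP; rewrite -subr_eq0; apply/eqP/hnorm_eq0/eqP.
rewrite eq_le hnorm_ge0 andbT; apply: (@le_of_le_add_eps _ _ 0 2) => // e e0.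
have [N1 hN1] := sl e e0; have [N2 hN2] := sl' e e0.
have := hN1 (maxn N1 N2) (leq_maxl _ _); have := hN2 (maxn N1 N2) (leq_maxr _ _).
have -> : l - l' = (s (maxn N1 N2) - l') - (s (maxn N1 N2) - l).
  by rewrite opprB [RHS]addrC addrA subrK.
have := hnormD (s (maxn N1 N2) - l') (- (s (maxn N1 N2) - l)); rewrite hnormN; lra.
Qed.

Lemma hlimE s l : hconverges ip s l -> hlim ip s = l.
Proof.
move=> sl.
exact: hconverges_unique (epsilon_spec (inhabits 0) (hconverges ip s) (ex_intro _ l sl)) sl.
Qed.

Lemma bounded_op_hconverges T s l : bounded_op ip T -> hconverges ip s l ->
  hconverges ip (fun n => T (s n)) (T l).
Proof.
move=> hT sl e e0; have [M hM] := hT.2.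
have M1 : 0 < `|M| + 1 by have := normr_ge0 M; lra.
have [N hN] := sl (e / (`|M| + 1)) (divr_gt0 e0 M1).
exists N => n Nn; rewrite -(bounded_opB hT); apply: le_lt_trans (hM _) _.
have := hN n Nn; have := hnorm_ge0 (s n - l); have := ler_norm M.
have : (`|M| + 1) * (e / (`|M| + 1)) = e by rewrite mulrC mulfVK // gt_eqF.
nra.
Qed.

Lemma sum_le_of_hconverges a (S : nat -> H) l (t : nat -> R) (L : R) :
  hconverges ip S l -> complex.Re (ip a l) <= L ->
  (forall n, ip a (S n) = (\sum_(m < n) t m)%:C%C) -> (forall m, 0 <= t m) ->
  forall N, \sum_(m < N) t m <= L.
Proof.
move=> Sl aL aS t0 N; apply: (le_of_le_add_eps (hnorm_ge0 a)) => e e0.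
have [N0 hN0] := Sl e e0; set n := maxn N N0.
apply: le_trans (sum_le_prefix t0 (leq_maxl N N0)) _.
have -> : \sum_(m < n) t m = complex.Re (ip a (S n)) by rewrite aS.
have -> : ip a (S n) = ip a l + ip a (S n - l) by rewrite ipBr addrC subrK.
rewrite ReD; apply: lerD => //; apply: le_trans (Re_le_normc _) _.
apply: le_trans (ip_cauchy_schwarz _ _) _; rewrite ler_wpM2l ?hnorm_ge0 //.
by apply/ltW/hN0; rewrite leq_maxr.
Qed.

Hypothesis ip_complete : forall s, hcauchy ip s -> exists l, hconverges ip s l.

Lemma hconverges_series (c : nat -> R[i]) (w : nat -> H) (B : R) :
  (forall k, hn (w k) <= 1) -> (forall n, \sum_(k < n) normc (c k) <= B) ->
  exists l, hconverges ip (fun n => \sum_(k < n) c k *: w k) l.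
Proof.
move=> w1 cB; apply: ip_complete.
set S := fun n => \sum_(k < n) c k *: w k.
set sg := fun n => \sum_(k < n) normc (c k).
have tail n d : hn (S (n + d)%N - S n) <= sg (n + d)%N - sg n.
  elim: d => [|d IH]; first by rewrite addn0 !subrr hnorm0.
  rewrite addnS /S /sg !big_ord_recr /= -/(S (n + d)%N) -/(sg (n + d)%N) -/(S n) -/(sg n).
  rewrite addrAC; apply: le_trans (hnormD _ _) _; rewrite hnormZ.
  have := w1 (n + d)%N; have := normc_ge0 (c (n + d)%N).
  have := hnorm_ge0 (w (n + d)%N); nra.
pose E : set R := range sg.
have supE : has_sup E.
  by split; [exists (sg 0%N), 0%N | exists B => _ [n _ <-]; apply: cB].
have sgE k : sg k <= sup E by apply: sup_upper_bound => //; exists k.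
move=> e e0; have [_ [N _ <-] supN] := sup_adherent e0 supE.
have small p q : (N <= p)%N -> (p <= q)%N -> hn (S q - S p) < e.
  move=> Np /subnKC <-; apply: le_lt_trans (tail _ _) _.
  have := sgE (p + (q - p))%N.
  have := sum_le_prefix (fun k => normc_ge0 (c k)) Np; rewrite -/(sg N) -/(sg p).
  lra.
exists N => m n Nm Nn; have [mn|nm] := leqP m n.
  by rewrite hnormB; apply: small.
by apply: small => //; apply: ltnW.
Qed.

Variable v : nat -> H.
Hypothesis hv : resolution_of_identity ip v.

Lemma bessel a N : \sum_(m < N) normc (ip (v m) a) ^+ 2 <= hn a ^+ 2.
Proof.
apply: (sum_le_of_hconverges (t := fun m => normc (ip (v m) a) ^+ 2) (hv a)).
- by rewrite hnorm_sqr.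
- move=> n; rewrite ip_sumr rmorph_sum; apply: eq_bigr => k _.
  by rewrite ipZr (ip_sym (v k) a) mulcJ_normc.
- by move=> m; rewrite exprn_ge0 ?normc_ge0.
Qed.

Section FrameForm.
Variable N : nat.

Definition frame_form (x y : H) : R[i] := \sum_(m < N) ip x (v m) * ip (v m) y.

Lemma frame_form_linear x y z (a : R[i]) :
  frame_form x (a *: y + z) = a * frame_form x y + frame_form x z.
Proof.
rewrite /frame_form mulr_sumr -big_split; apply: eq_bigr => m _.
by rewrite ip_linear /=; ring.
Qed.

Lemma frame_form_sym x y : frame_form y x = (frame_form x y)^*.
Proof.
rewrite /frame_form rmorph_sum; apply: eq_bigr => m _.
by rewrite rmorphM /= -!ip_sym mulrC.
Qed.

Lemma frame_formxx x : frame_form x x = (\sum_(m < N) normc (ip (v m) x) ^+ 2)%:C%C.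
Proof.
rewrite /frame_form rmorph_sum; apply: eq_bigr => m _.
by rewrite (ip_sym (v m) x) mulrC mulcJ_normc.
Qed.

Lemma frame_form_ge0 x : 0 <= frame_form x x.
Proof. by rewrite frame_formxx ler0c sumr_ge0 // => m _; rewrite exprn_ge0 ?normc_ge0. Qed.

Lemma frame_form_bound x y : normc (frame_form x y) <= hn x * hn y.
Proof.
have := sesq_cauchy_schwarz frame_form_linear frame_form_sym frame_form_ge0 x y.
rewrite !frame_formxx /= => cs.
rewrite -ler_sqr ?nnegrE ?normc_ge0 ?mulr_ge0 ?hnorm_ge0 //.
apply: le_trans cs _; rewrite exprMn.
by apply: ler_pM; rewrite ?bessel ?sumr_ge0 // => m _; rewrite exprn_ge0 ?normc_ge0.
Qed.

End FrameForm.

Lemma frame_trace_nuclear_le (a b : nat -> H) n N :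
  complex.Re (\sum_(m < N) ip (v m) (\sum_(j < n) ip (b j) (v m) *: a j))
    <= \sum_(j < n) hn (a j) * hn (b j).
Proof.
have -> : \sum_(m < N) ip (v m) (\sum_(j < n) ip (b j) (v m) *: a j)
    = \sum_(j < n) frame_form N (b j) (a j).
  rewrite [RHS]exchange_big; apply: eq_bigr => m _; rewrite ip_sumr.
  by apply: eq_bigr => j _; rewrite ipZr.
apply: le_trans (Re_le_normc _) _; apply: le_trans (normc_sum _ _ _) _.
by apply: ler_sum => j _; rewrite mulrC frame_form_bound.
Qed.

Lemma proj_ip_sqr P x : orth_projection ip P -> ip x (P x) = (hn (P x) ^+ 2)%:C%C.
Proof. by case=> _ PP Psym; rewrite -PP -Psym PP ip_normE. Qed.

Lemma trace_class_proj_frame_bounded P : orth_projection ip P -> trace_class ip P ->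
  exists M, forall N, \sum_(m < N) hn (P (v m)) ^+ 2 <= M.
Proof.
move=> hP [a [b [[M hM] Pnuc]]]; exists M => N.
set S := fun n z => \sum_(j < n) ip (b j) z *: a j.
have vN : 0 <= \sum_(m < N) hn (v m) by apply: sumr_ge0 => m _; apply: hnorm_ge0.
apply: (le_of_le_add_eps vN) => e e0.
have [n0 Sn0] := eventually_all_ltn
  (Q := fun m n => hn (S n (v m) - P (v m)) < e) (fun m => Pnuc (v m) e e0) N.
apply: (@le_trans _ _ (complex.Re (\sum_(m < N) ip (v m) (S n0 (v m)))
                       + \sum_(m < N) hn (v m) * e)); last first.
  by rewrite -mulr_suml lerD2r; apply: le_trans (frame_trace_nuclear_le _ _ _ _) (hM n0).
rewrite Re_sum -big_split; apply: ler_sum => m _ /=.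
have -> : hn (P (v m)) ^+ 2 = complex.Re (ip (v m) (P (v m))) by rewrite proj_ip_sqr.
have -> : ip (v m) (P (v m))
    = ip (v m) (S n0 (v m)) - ip (v m) (S n0 (v m) - P (v m)).
  by rewrite ipBr opprB addrC subrK.
rewrite ReD lerD2l; apply: le_trans (Re_le_normc _) _; rewrite normcN.
apply: le_trans (ip_cauchy_schwarz _ _) _; rewrite ler_wpM2l ?hnorm_ge0 //.
exact/ltW/Sn0.
Qed.

Lemma frame_eigen_commute P Q : bounded_op ip P -> bounded_op ip Q ->
  (forall k, exists a, P (v k) = a *: v k) -> (forall k, exists b, Q (v k) = b *: v k) ->
  P \o Q = Q \o P.
Proof.
move=> hP hQ Pv Qv; apply: functional_extensionality => x /=.
have PQ_sum n : P (Q (\sum_(k < n) ip (v k) x *: v k))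
                = Q (P (\sum_(k < n) ip (v k) x *: v k)).
  rewrite !(bounded_op_sum hP, bounded_op_sum hQ); apply: eq_bigr => k _.
  have [a Pk] := Pv k; have [b Qk] := Qv k.
  rewrite !(bounded_opZ hP, bounded_opZ hQ) Pk Qk !(bounded_opZ hP, bounded_opZ hQ) Pk Qk.
  by rewrite !scalerA mulrAC.
have PQ := bounded_op_hconverges hP (bounded_op_hconverges hQ (hv x)).
rewrite (functional_extensionality _ _ PQ_sum) in PQ.
exact: hconverges_unique PQ (bounded_op_hconverges hQ (bounded_op_hconverges hP (hv x))).
Qed.

Variable u : nat -> H.
Hypothesis hu : forall k, hn (u k) = 1.

Definition Phi_series (A : H -> H) (y : H) (n : nat) : H :=
  \sum_(k < n) (ip (v k) (A (v k)) * ip (u k) y) *: u k.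

Lemma Phi_zero y : Phi ip u v (fun=> 0) y = 0.
Proof.
apply: hlimE => e e0; exists 0%N => n _.
by rewrite big1 ?subrr ?hnorm0 // => k _; rewrite ip0r mul0r scale0r.
Qed.

Section DiagonalWeights.
Variables (A : H -> H) (alpha : nat -> R) (B : R).
Hypothesis A_diag : forall l, ip (v l) (A (v l)) = (alpha l)%:C%C.
Hypothesis alpha_ge0 : forall l, 0 <= alpha l.
Hypothesis alpha_bounded : forall n, \sum_(l < n) alpha l <= B.

Lemma Phi_series_hconverges y : hconverges ip (Phi_series A y) (Phi ip u v A y).
Proof.
have [l Al] : exists l, hconverges ip (Phi_series A y) l.
  apply: (hconverges_series (c := fun k => ip (v k) (A (v k)) * ip (u k) y)
    (B := B * hn y)) => [k|n]; first by rewrite hu.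
  apply: le_trans (ler_wpM2r (hnorm_ge0 y) (alpha_bounded n)).
  rewrite mulr_suml; apply: ler_sum => k _.
  rewrite normcM A_diag normc_real // ler_wpM2l //.
  by apply: le_trans (ip_cauchy_schwarz _ _) _; rewrite hu mul1r.
by rewrite /Phi (hlimE Al).
Qed.

Lemma Phi_diag_le y k :
  alpha k * normc (ip (u k) y) ^+ 2 <= complex.Re (ip y (Phi ip u v A y)).
Proof.
have t0 m : 0 <= alpha m * normc (ip (u m) y) ^+ 2.
  by rewrite mulr_ge0 ?exprn_ge0 ?normc_ge0.
apply: le_trans (term_le_sum k t0) _.
apply: (sum_le_of_hconverges (t := fun m => alpha m * normc (ip (u m) y) ^+ 2)
  (Phi_series_hconverges y)) => // n.
rewrite ip_sumr rmorph_sum; apply: eq_bigr => m _.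
by rewrite ipZr (ip_sym (u m) y) A_diag -mulrA mulcJ_normc -rmorphM.
Qed.

End DiagonalWeights.

Lemma rank_one_trace_class w : trace_class ip (fun z => ip w z *: w).
Proof.
exists (fun=> w), (fun j => if j == 0%N then w else 0); split.
  exists (hn w * hn w) => -[|n]; first by rewrite big_ord0 mulr_ge0 ?hnorm_ge0.
  by rewrite big_ord_recl big1 ?addr0 // => i _; rewrite hnorm0 mulr0.
move=> z e e0; exists 1%N => -[//|n] _.
by rewrite big_ord_recl big1 ?addr0 ?subrr ?hnorm0 // => i _; rewrite ip0l scale0r.
Qed.

Lemma mult_domain_proj_frame P k : orth_projection ip P -> mult_domain ip u v P ->
  P (v k) = 0 \/ P (v k) = v k.
Proof.
move=> hP [Ptc Pmult]; have [Pbd PP Psym] := hP.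
have [->|Pvk0] := eqVneq (P (v k)) 0; [by left | right].
set w := v k - P (v k).
have Pw : P w = 0 by rewrite (bounded_opB Pbd) PP subrr.
set X := fun z => ip w z *: w.
have PX : P \o X = fun=> 0.
  by apply: functional_extensionality => z /=; rewrite (bounded_opZ Pbd) Pw scaler0.
set W := Phi ip u v X (u k).
have PW : Phi ip u v P W = 0.
  have [PXE _] := Pmult X (rank_one_trace_class w).
  by have := congr1 (@^~ (u k)) PXE; rewrite PX Phi_zero /= => <-.
have [M PvM] := trace_class_proj_frame_bounded hP Ptc.
have uW : ip (u k) W = 0.
  have := Phi_diag_le (alpha := fun m => hn (P (v m)) ^+ 2)
    (fun m => proj_ip_sqr _ hP) (fun m => exprn_ge0 2 (hnorm_ge0 _)) PvM W k.
  have Pvk_gt0 : 0 < hn (P (v k)) ^+ 2.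
    by rewrite exprn_gt0 // lt_def hnorm_ge0 (contra_neq (@hnorm_eq0 _)).
  by rewrite PW ip0r pmulr_rle0 // => /normc_sqr_le0.
have vw : ip (v k) w = 0.
  have X_diag m : ip (v m) (X (v m)) = (normc (ip (v m) w) ^+ 2)%:C%C.
    by rewrite /X ipZr (ip_sym (v m) w) mulJc_normc.
  have := Phi_diag_le X_diag (fun m => exprn_ge0 2 (normc_ge0 _)) (bessel w) (u k) k.
  by rewrite -/W uW ip_normE hu expr1n normc_real // expr1n mulr1 => /normc_sqr_le0.
have : ip w w = 0 by rewrite {1}/w ipBl vw Psym Pw ip0r subrr.
by move/ip_definite/eqP; rewrite subr_eq0 => /eqP.
Qed.

End Hilbert.

Theorem proposition3p4 (R : realType) (H : lmodType R[i]) (ip : H -> H -> R[i])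
    (hH : separable_infdim_hilbert ip) (u v : nat -> H)
    (hu : forall k, hnorm ip (u k) = 1)
    (hv : resolution_of_identity ip v) :
  (forall P : H -> H, orth_projection ip P -> mult_domain ip u v P ->
     forall k, exists lam : R[i], P (v k) = lam *: v k) /\
  (forall P Q : H -> H, orth_projection ip P -> mult_domain ip u v P ->
     orth_projection ip Q -> mult_domain ip u v Q ->
     P \o Q = Q \o P).
Proof.
have [lin [sym [ge0 [def [complete _]]]]] := hH.
have eigen P : orth_projection ip P -> mult_domain ip u v P ->
    forall k, exists lam : R[i], P (v k) = lam *: v k.
  move=> hP mP k.
  have [Pk|Pk] := mult_domain_proj_frame lin sym ge0 def complete hv hu k hP mP.
  - by exists 0; rewrite scale0r.
  - by exists 1; rewrite scale1r.
split=> // P Q hP mP hQ mQ; have [Pbd _ _] := hP; have [Qbd _ _] := hQ.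
by apply: (frame_eigen_commute lin sym ge0 def hv Pbd Qbd); apply: eigen.
Qed.
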